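(* Let $\mathfrak{g}$ be a three-dimensional Lie algebra, and fix a basis of $\mathfrak{g}$ (identifying $\mathfrak{g}\cong\mathbb{R}^3$). Let \[ F := \left\{ \begin{pmatrix} x_{11} & 0 & 0 \\ x_{21} & x_{22} & 0 \\ x_{31} & 0 & x_{22} \end{pmatrix} \;\middle|\; x_{11}, x_{22} > 0 \right\}. \] If $F \subset \mathbb{R}^\times \mathrm{Aut}(\mathfrak{g})$, then \[ L' := \left\{ \begin{pmatrix} 1 & 0 & 0 \\ 0 & 1 & 0 \\ 0 & a_{32} & a_{33} \end{pmatrix} \;\middle|\; a_{33} > 0 \right\} \] is a set of representatives of $\mathfrak{PM}$, i.e. $\mathfrak{PM} = \{ [h.\langle\cdot,\cdot\rangle_0] \mid h \in L' \}$.
   Context: $\mathbb{R}^\times$ denotes the nonzero scalar maps on $\mathfrak{g}$ and $\mathrm{Aut}(\mathfrak{g})$ the automorphism group. $\mathrm{GL}_3(\mathbb{R})$ acts on inner products by $g.\langle\cdot,\cdot\rangle := \langle g^{-1}\cdot, g^{-1}\cdot\rangle$; $\langle\cdot,\cdot\rangle_0$ is the inner product making the canonical basis $\{e_1,e_2,e_3\}$ orthonormal. Two inner products are isometric up to scaling if $\langle\cdot,\cdot\rangle_1 = k\langle f\cdot, f\cdot\rangle_2$ for some $k>0$ and automorphism $f$; $[\cdot]$ denotes the equivalence class, and $\mathfrak{PM}$ is the set of all equivalence classes of inner products on $\mathfrak{g}$ (the moduli space of left-invariant Riemannian metrics). *)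

From HB Require Import structures.
From mathcomp Require Import all_boot all_order all_algebra.
From mathcomp Require Import reals.
Set Implicit Arguments. Unset Strict Implicit. Unset Printing Implicit Defensive.
Import Order.TTheory GRing.Theory Num.Theory.
Local Open Scope ring_scope.

(* g is identified with R^3 (column vectors) via the fixed basis;
   a Lie bracket is a bilinear, alternating map satisfying Jacobi. *)
Definition is_lie_bracket (R : realType)
  (br : 'cV[R]_3 -> 'cV[R]_3 -> 'cV[R]_3) : Prop :=
  [/\ (forall (a : R) x y z, br (a *: x + y) z = a *: br x z + br y z),
      (forall (a : R) x y z, br z (a *: x + y) = a *: br z x + br z y),
      (forall x, br x x = 0) &
      (forall x y z, br x (br y z) + br y (br z x) + br z (br x y) = 0)].

Definition is_aut (R : realType) (br : 'cV[R]_3 -> 'cV[R]_3 -> 'cV[R]_3)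
  (f : 'M[R]_3) : Prop :=
  f \in unitmx /\ forall x y, f *m br x y = br (f *m x) (f *m y).

Definition in_scalar_aut (R : realType) (br : 'cV[R]_3 -> 'cV[R]_3 -> 'cV[R]_3)
  (X : 'M[R]_3) : Prop :=
  exists (c : R) (f : 'M[R]_3), c != 0 /\ is_aut br f /\ X = c *: f.

(* Inner products on R^3, represented by their Gram matrices w.r.t. the
   canonical basis: <x, y> = x^T S y. *)
Definition inner_product (R : realType) (S : 'M[R]_3) : Prop :=
  S^T = S /\ forall x : 'cV[R]_3, x != 0 -> 0 < (x^T *m S *m x) 0 0.

Definition ip0 (R : realType) : 'M[R]_3 := 1%:M.

(* g.<.,.> := <g^-1 ., g^-1 .>  (Gram matrix (g^-1)^T S g^-1) *)
Definition act (R : realType) (g S : 'M[R]_3) : 'M[R]_3 :=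
  (invmx g)^T *m S *m invmx g.

Definition isom_up_to_scaling (R : realType)
  (br : 'cV[R]_3 -> 'cV[R]_3 -> 'cV[R]_3) (S1 S2 : 'M[R]_3) : Prop :=
  exists (k : R) (f : 'M[R]_3), 0 < k /\ is_aut br f /\
    S1 = k *: (f^T *m S2 *m f).

Definition mx3 (R : realType) (a11 a12 a13 a21 a22 a23 a31 a32 a33 : R)
  : 'M[R]_3 :=
  \matrix_(i < 3, j < 3)
    nth 0 (nth [::] [:: [:: a11; a12; a13]; [:: a21; a22; a23];
                        [:: a31; a32; a33]] i) j.

Definition in_F (R : realType) (X : 'M[R]_3) : Prop :=
  exists x11 x21 x22 x31 : R, 0 < x11 /\ 0 < x22 /\
    X = mx3 x11 0 0 x21 x22 0 x31 0 x22.

Definition in_Lprime (R : realType) (h : 'M[R]_3) : Prop :=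
  exists a32 a33 : R, 0 < a33 /\ h = mx3 1 0 0 0 1 0 0 a32 a33.

(* Every inner product S factors as S = L^T L with L lower triangular with
   positive diagonal (Cholesky started from the bottom-right corner).  Such an
   L splits as L = h^-1 X with h in L' and X in F, so S = X^T (h.<.,.>_0) X;
   since X = c f with f an automorphism, S is isometric up to the scaling c^2
   to h.<.,.>_0.  Conversely h.<.,.>_0 = (h^-1)^T h^-1 is the Gram matrix of
   an invertible matrix, hence an inner product. *)
From HB Require Import structures.
From mathcomp Require Import all_boot all_order all_algebra.
From mathcomp Require Import reals ring lra.
Import Order.TTheory GRing.Theory Num.Theory.
Set Implicit Arguments. Unset Strict Implicit.
Local Open Scope ring_scope.

Lemma trmx_mul_self_gt0 (R : realDomainType) n (v : 'cV[R]_n) :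
  v != 0 -> 0 < (v^T *m v) 0 0.
Proof.
move=> v_neq0; rewrite mxE lt_def.
under eq_bigr do rewrite mxE -expr2.
rewrite sumr_ge0 ?andbT => [|i _]; last exact: sqr_ge0.
apply: contra v_neq0 => /eqP sum_eq0.
apply/eqP/matrixP => i j; rewrite (ord1 j) mxE.
by apply/eqP; rewrite -sqrf_eq0 (psumr_eq0P _ sum_eq0) // => k _; exact: sqr_ge0.
Qed.

Section ThreeByThree.
Variable R : realType.

Definition col3 (x y z : R) : 'cV[R]_3 :=
  \matrix_(i < 3, j < 1) nth 0 [:: x; y; z] i.

Lemma ord3P (i : 'I_3) : [\/ i = 0, i = 1 | i = 2%:R].
Proof.
by case: i => [[|[|[|m]]] lt_i3];
  [constructor 1|constructor 2|constructor 3|]; try apply: val_inj.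
Qed.

Lemma mx3E (A : 'M[R]_3) : A = mx3 (A 0 0) (A 0 1) (A 0 2%:R)
  (A 1 0) (A 1 1) (A 1 2%:R) (A 2%:R 0) (A 2%:R 1) (A 2%:R 2%:R).
Proof.
apply/matrixP => i j; rewrite mxE.
by case: (ord3P i) => ->; case: (ord3P j) => ->.
Qed.

Lemma mx3_mul (a11 a12 a13 a21 a22 a23 a31 a32 a33
               b11 b12 b13 b21 b22 b23 b31 b32 b33 : R) :
  mx3 a11 a12 a13 a21 a22 a23 a31 a32 a33 *m
  mx3 b11 b12 b13 b21 b22 b23 b31 b32 b33 =
  mx3 (a11*b11+a12*b21+a13*b31) (a11*b12+a12*b22+a13*b32) (a11*b13+a12*b23+a13*b33)
      (a21*b11+a22*b21+a23*b31) (a21*b12+a22*b22+a23*b32) (a21*b13+a22*b23+a23*b33)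
      (a31*b11+a32*b21+a33*b31) (a31*b12+a32*b22+a33*b32) (a31*b13+a32*b23+a33*b33).
Proof.
apply/matrixP => i j; rewrite !mxE !big_ord_recr big_ord0 /= !mxE add0r.
by case: (ord3P i) => ->; case: (ord3P j) => ->.
Qed.

Lemma mx3_tr (a11 a12 a13 a21 a22 a23 a31 a32 a33 : R) :
  (mx3 a11 a12 a13 a21 a22 a23 a31 a32 a33)^T =
  mx3 a11 a21 a31 a12 a22 a32 a13 a23 a33.
Proof.
by apply/matrixP => i j; rewrite !mxE; case: (ord3P i) => ->; case: (ord3P j) => ->.
Qed.

Lemma mx3_1 : 1%:M = mx3 1 0 0 0 1 0 0 0 (1 : R).
Proof. by rewrite [LHS]mx3E !mxE. Qed.

Lemma col3_quad_form (a11 a12 a13 a21 a22 a23 a31 a32 a33 x y z : R) :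
  ((col3 x y z)^T *m mx3 a11 a12 a13 a21 a22 a23 a31 a32 a33 *m col3 x y z) 0 0 =
  x * (a11 * x + a12 * y + a13 * z) + y * (a21 * x + a22 * y + a23 * z)
  + z * (a31 * x + a32 * y + a33 * z).
Proof. by rewrite !(mxE, big_ord_recr, big_ord0) /=; ring. Qed.

Lemma col3_eq0 (x y z : R) : (col3 x y z == 0) = [&& x == 0, y == 0 & z == 0].
Proof.
apply/eqP/and3P => [/matrixP col0 | [/eqP-> /eqP-> /eqP->]].
  by split; apply/eqP; [move: (col0 0 0) | move: (col0 1 0) | move: (col0 2%:R 0)];
    rewrite !mxE.
by apply/matrixP => i j; rewrite !mxE; case: (ord3P i) => ->.
Qed.

Lemma sqrt_gt0_exists (x : R) : 0 < x -> exists y, 0 < y /\ x = y ^+ 2.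
Proof. by move=> x_gt0; exists (Num.sqrt x); rewrite sqrtr_gt0 sqr_sqrtr ?ltW. Qed.

Lemma sym3_lower_cholesky (a b c d e f : R) :
  (forall x y z, col3 x y z != 0 ->
     0 < ((col3 x y z)^T *m mx3 a b c b d e c e f *m col3 x y z) 0 0) ->
  exists p q r s t u : R, [/\ 0 < p, 0 < r, 0 < u &
    mx3 a b c b d e c e f = (mx3 p 0 0 q r 0 s t u)^T *m mx3 p 0 0 q r 0 s t u].
Proof.
move=> pos; have {}pos x y z : [|| x != 0, y != 0 | z != 0] ->
    0 < x * (a * x + b * y + c * z) + y * (b * x + d * y + e * z)
        + z * (c * x + e * y + f * z).
  by move=> xyz_neq0; rewrite -col3_quad_form pos // col3_eq0 !negb_and.
have [u [u_gt0 f_eq]] : exists u, 0 < u /\ f = u ^+ 2.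
  by apply: sqrt_gt0_exists; move: (pos 0 0 1); rewrite oner_neq0 !orbT; lra.
subst f; have u_neq0 := lt0r_neq0 u_gt0.
have [t e_eq] : exists t, e = t * u by exists (e / u); field.
have [s c_eq] : exists s, c = s * u by exists (c / u); field.
subst e c; have [r [r_gt0 d_eq]] : exists r, 0 < r /\ d = r ^+ 2 + t ^+ 2.
  have := pos 0 u (- t); rewrite u_neq0 orbT => /(_ isT) quad_gt0.
  have : 0 < u ^+ 2 * (d - t ^+ 2) by lra.
  rewrite pmulr_rgt0 ?exprn_gt0 // => /sqrt_gt0_exists [r [r_gt0 dt_eq]].
  by exists r; split=> //; rewrite -dt_eq; ring.
subst d; have r_neq0 := lt0r_neq0 r_gt0.
have [q b_eq] : exists q, b = q * r + s * t by exists ((b - s * t) / r); field.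
subst b; have [p [p_gt0 a_eq]] : exists p, 0 < p /\ a = p ^+ 2 + q ^+ 2 + s ^+ 2.
  (* this vector is S-orthogonal to e_2 and e_3 *)
  have := pos 1 (- q / r) ((t * q / r - s) / u); rewrite oner_neq0 => /(_ isT).
  rewrite [X in 0 < X -> _](_ : _ = a - q ^+ 2 - s ^+ 2); last first.
    by field; rewrite u_neq0 r_neq0.
  move=> /sqrt_gt0_exists [p [p_gt0 a_eq]].
  by exists p; split=> //; rewrite -a_eq; ring.
subst a; exists p, q, r, s, t, u; split=> //.
by rewrite mx3_tr mx3_mul; congr mx3; ring.
Qed.

Lemma inner_product_lower_cholesky (S : 'M[R]_3) : inner_product S ->
  exists p q r s t u : R, [/\ 0 < p, 0 < r, 0 < u &
    S = (mx3 p 0 0 q r 0 s t u)^T *m mx3 p 0 0 q r 0 s t u].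
Proof.
move=> [S_sym S_pos]; have S_symE i j : S j i = S i j by rewrite -[in RHS]S_sym mxE.
rewrite (mx3E S) (S_symE 0 1) (S_symE 0 2%:R) (S_symE 1 2%:R) in S_pos *.
by apply: sym3_lower_cholesky => x y z /S_pos.
Qed.

Lemma inner_product_gram (M : 'M[R]_3) : M \in unitmx -> inner_product (M^T *m M).
Proof.
move=> M_unit; split=> [|x x_neq0]; first by rewrite trmx_mul trmxK.
rewrite !mulmxA -trmx_mul -mulmxA; apply: trmx_mul_self_gt0.
by apply: contra x_neq0 => /eqP Mx0; rewrite -(mulKmx M_unit x) Mx0 mulmx0.
Qed.

Lemma act_ip0 (h : 'M[R]_3) : act h (ip0 R) = (invmx h)^T *m invmx h.
Proof. by rewrite /act /ip0 mulmx1. Qed.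

Lemma Lprime_unitmx (h : 'M[R]_3) : in_Lprime h -> h \in unitmx.
Proof.
move=> [a [b [b_gt0 ->]]]; have b_neq0 := lt0r_neq0 b_gt0.
have inv_h : mx3 1 0 0 0 1 0 0 a b *m mx3 1 0 0 0 1 0 0 (- a / b) b^-1 = 1%:M.
  by rewrite mx3_mul mx3_1; congr mx3; field.
by case: (mulmx1_unit inv_h).
Qed.

Lemma lower_triangular_Lprime_F_factor (p q r s t u : R) :
  0 < p -> 0 < r -> 0 < u ->
  exists h X, [/\ in_Lprime h, in_F X & mx3 p 0 0 q r 0 s t u = invmx h *m X].
Proof.
move=> p_gt0 r_gt0 u_gt0; have u_neq0 := lt0r_neq0 u_gt0.
pose h := mx3 1 0 0 0 1 0 0 (- t / u) (r / u).
have hL : in_Lprime h by exists (- t / u), (r / u); split; first exact: divr_gt0.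
exists h, (h *m mx3 p 0 0 q r 0 s t u); split=> //; last first.
  by rewrite mulmxA mulVmx ?mul1mx ?Lprime_unitmx.
exists p, q, r, ((r * s - t * q) / u); do 2!split=> //.
by rewrite /h mx3_mul; congr mx3; field.
Qed.

End ThreeByThree.

Lemma isom_up_to_scaling_scalar_aut (R : realType)
  (br : 'cV[R]_3 -> 'cV[R]_3 -> 'cV[R]_3) (S T : 'M[R]_3) (c : R) (f : 'M[R]_3) :
  c != 0 -> is_aut br f -> S = (c *: f)^T *m T *m (c *: f) ->
  isom_up_to_scaling br S T.
Proof.
move=> c_neq0 f_aut ->; exists (c ^+ 2), f; split.
  by rewrite exprn_even_gt0 //= c_neq0.
split=> //.
by rewrite [(c *: f)^T]linearZ -scalemxAr -!scalemxAl scalerA expr2.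
Qed.

Theorem lemma3p7 (R : realType) (br : 'cV[R]_3 -> 'cV[R]_3 -> 'cV[R]_3)
  (Hlie : is_lie_bracket br)
  (HF : forall X : 'M[R]_3, in_F X -> in_scalar_aut br X) :
  (forall h : 'M[R]_3, in_Lprime h -> inner_product (act h (ip0 R))) /\
  (forall S : 'M[R]_3, inner_product S ->
     exists h : 'M[R]_3, in_Lprime h /\ isom_up_to_scaling br S (act h (ip0 R))).
Proof.
split=> [h hL | S S_ip].
  by rewrite act_ip0; apply: inner_product_gram; rewrite unitmx_inv Lprime_unitmx.
have [p [q [r [s [t [u [p_gt0 r_gt0 u_gt0 ->]]]]]]] :=
  inner_product_lower_cholesky S_ip.
have [h [X [hL XF ->]]] := lower_triangular_Lprime_F_factor q s t p_gt0 r_gt0 u_gt0.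
have [c [f [c_neq0 [f_aut X_eq]]]] := HF X XF.
exists h; split=> //; apply: (isom_up_to_scaling_scalar_aut c_neq0 f_aut).
by rewrite act_ip0 -X_eq trmx_mul !mulmxA.
Qed.
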